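(* The set $\mathbb Q^+$ of positive rational numbers, canonically arranged as below, has size sequence $$\sigma(\mathbb Q^+)=(\alpha+1)\cdot\sigma(\mathbb I),\quad\text{i.e. } \sigma_n(\mathbb Q^+)=(n+1)\Phi(n),$$ where $\Phi(n)=\sum_{i=1}^n\varphi(i)$ with $\varphi$ Euler's totient function; moreover $\sigma(\mathbb Q^+)\approx_\mathcal F\alpha^3$, and more precisely $$\tfrac{3}{10}(\alpha^3+\alpha^2)<_\mathcal F\sigma(\mathbb Q^+)<_\mathcal F\frac{\alpha^3-\alpha}{2}.$$
   Context: $\mathbb N=\{1,2,\dots\}$. Every positive rational is uniquely written as a mixed fraction $p+k/m$ with $p\in\mathbb N_0$, $k,m\in\mathbb N$, $\gcd(k,m)=1$, $k\le m$, and is represented by the triple $(p,k,m)$; thus $\mathbb Q^+=\mathbb N_0\times\mathbb I$ where $\mathbb I=(0,1]\cap\mathbb Q$ is represented by the pairs $(k,m)$. Arrangements: $\mathbb N_0$ has first component $\{0,1\}$ and $n$-th component $\{n\}$ for $n\ge2$; $\mathbb I$ has $n$-th component $\{(k,n):\gcd(k,n)=1,k\le n\}$; a product $A\times B$ has $n$-th component $\bigcup\{A_i\times B_j:\max\{i,j\}=n\}$. Hence the triple $(p,k,m)$ lies in component $\max\{\ell(p),m\}$ where $\ell(0)=1$ and $\ell(p)=p$ for $p\ge1$. The size sequence is $\sigma(A)=(\sigma_n(A))_n$, $\sigma_n(A)=|A_1|+\dots+|A_n|$. $\alpha=(n)_n$; operations on sequences are componentwise; constants are identified with constant sequences. $(a_n)<_\mathcal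 F(b_n)$ iff $a_n<b_n$ for all sufficiently large $n$; $(a_n)\approx_\mathcal F(b_n)$ iff some $k\in\mathbb N$ has $ka_n\ge b_n$ for all large $n$ and some $k$ has $kb_n\ge a_n$ for all large $n$. *)

From mathcomp Require Import all_boot all_order all_algebra.
Set Implicit Arguments. Unset Strict Implicit. Unset Printing Implicit Defensive.
Import Order.TTheory GRing.Theory Num.Theory.

(* An arrangement of a set A is a sequence of finite components A_1, A_2, ...
   (index 0 unused); represented by a function from nat to finite lists. *)
Definition arrangement (T : Type) := nat -> seq T.

Definition N0arr : arrangement nat :=
  fun n => if n == 0 then [::] else if n == 1 then [:: 0; 1] else [:: n].

(* I = (0,1] ∩ Q represented by pairs (k,m), gcd(k,m)=1, 1 <= k <= m;
   n-th component = {(k,n) : gcd(k,n)=1, k <= n}. *)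
Definition Iarr : arrangement (nat * nat) :=
  fun n => [seq (k, n) | k <- iota 1 n & coprime k n].

Definition prod_arr (S T : Type) (A : arrangement S) (B : arrangement T)
  : arrangement (S * T) :=
  fun n => flatten [seq [seq (a, b) | a <- A ij.1, b <- B ij.2]
                   | ij <- [seq (i, j) | i <- iota 1 n, j <- iota 1 n]
                   & maxn ij.1 ij.2 == n].

(* Q+ = N_0 × I, the triple (p,k,m) being ((p,(k,m))), i.e. p + k/m. *)
Definition Qplus_arr : arrangement (nat * (nat * nat)) := prod_arr N0arr Iarr.

Definition sigma (T : Type) (A : arrangement T) (n : nat) : nat :=
  \sum_(1 <= i < n.+1) size (A i).

Definition Phi (n : nat) : nat := \sum_(1 <= i < n.+1) totient i.

Local Open Scope ring_scope.

Definition ltF (a b : nat -> rat) : Prop :=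
  exists N : nat, forall n : nat, (N <= n)%N -> a n < b n.

Definition approxF (a b : nat -> rat) : Prop :=
  (exists k : nat, (0 < k)%N /\ exists N : nat, forall n : nat, (N <= n)%N ->
      b n <= k%:R * a n) /\
  (exists k : nat, (0 < k)%N /\ exists N : nat, forall n : nat, (N <= n)%N ->
      a n <= k%:R * b n).

(* sigma is multiplicative on product arrangements, N_0 contributes n + 1
   and the n-th component of I has phi(n) elements, so sigma_n(Q+) = (n + 1) Phi(n),
   where Phi(n) counts the coprime pairs a <= b <= n.  The upper bound only needs
   phi(b) <= b - 1, with some slack at b = 4 and 6.
   For the lower bound, sieve the pairs a <= b <= n by the primes p <= 160: adding a
   prime q to the sieve subtracts the count at n / q, so the sieved count is
   (n^2 / 2) prod_(p <= 160) (1 - p^-2) + O(n) ~ 0.3044 n^2, and the constants of this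
   expansion can be computed exactly.  A sieved pair that is not coprime shares a prime
   q > 160, and there are at most sum_(q > 160) (n/q)(n/q + 1)/2 <= (1 + o(1)) n^2 / 320
   such pairs, which leaves Phi(n) > 0.3 n^2 for large n. *)

From Stdlib Require Import ZArith Lia.
From mathcomp Require Import all_boot all_order all_algebra.
From mathcomp Require Import zify.
Import Order.TTheory GRing.Theory Num.Theory.

Lemma sigmaS T (A : arrangement T) n : sigma A n.+1 = sigma A n + size (A n.+1).
Proof. by rewrite /sigma big_nat_recr. Qed.

Lemma size_prod_arr S T (A : arrangement S) (B : arrangement T) n :
  size (prod_arr A B n) =
  \sum_(1 <= i < n.+1) \sum_(1 <= j < n.+1) (maxn i j == n) * (size (A i) * size (B j)).
Proof.
rewrite /prod_arr size_flatten /shape -map_comp sumnE big_map big_filter.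
rewrite big_mkcond big_allpairs /index_iota subSS subn0.
apply: eq_bigr => i _; apply: eq_bigr => j _ /=.
by case: eqP => _; rewrite ?size_allpairs ?mul1n ?mul0n.
Qed.

Lemma sum_nat_widen0 p m n (F : nat -> nat) : p <= m <= n ->
  (forall i, m <= i < n -> F i = 0) -> \sum_(p <= i < m) F i = \sum_(p <= i < n) F i.
Proof.
case/andP=> le_pm le_mn F0; rewrite [RHS](big_cat_nat le_pm le_mn) /=.
by rewrite [X in _ + X]big1_seq ?addn0 // => i; rewrite mem_index_iota => /F0.
Qed.

Lemma sigma_prod_arr S T (A : arrangement S) (B : arrangement T) n :
  sigma (prod_arr A B) n = sigma A n * sigma B n.
Proof.
have F0 k i j c : k < maxn i j -> (maxn i j == k) * c = 0 by move=> lt_k_ij; rewrite gtn_eqF.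
have size_k k : k <= n -> size (prod_arr A B k) =
    \sum_(1 <= i < n.+1) \sum_(1 <= j < n.+1) (maxn i j == k) * (size (A i) * size (B j)).
  move=> le_kn; rewrite size_prod_arr (@sum_nat_widen0 1 k.+1 n.+1) // => [|i /andP[lt_ki _]].
    apply: eq_bigr => i _; apply: sum_nat_widen0 => // j /andP[lt_kj _].
    by rewrite F0 // leq_max lt_kj orbT.
  by apply: big1 => j _; rewrite F0 // leq_max lt_ki.
rewrite /sigma big_distrl /=; under eq_big_nat => k /andP[_ lt_kn] do rewrite size_k //.
rewrite exchange_big_nat /=; apply: eq_big_nat => i /andP[i_gt0 lt_in].
rewrite exchange_big_nat big_distrr /=; apply: eq_big_nat => j /andP[j_gt0 lt_jn].
rewrite -big_distrl /= -[RHS]mul1n; congr (_ * _).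
rewrite (bigD1_seq (maxn i j)) ?iota_uniq //= ?eqxx; last by rewrite mem_index_iota; lia.
by rewrite big1 // => k; rewrite eq_sym => /negbTE ->.
Qed.

Lemma totient_sum_coprime b : totient b = \sum_(1 <= a < b.+1) coprime a b.
Proof.
rewrite totient_count_coprime; case: b => [|b]; first by rewrite !big_geq.
rewrite [LHS]big_ltn // [RHS]big_nat_recr //= /coprime gcdn0 gcdnn addnC.
by congr (_ + _); apply: eq_bigr => a _; rewrite gcdnC.
Qed.

Lemma size_Iarr b : size (Iarr b) = totient b.
Proof.
rewrite /Iarr size_map size_filter totient_sum_coprime -sum1_count big_mkcond.
by rewrite /index_iota subSS subn0; apply: eq_bigr => a _; case: coprime.
Qed.

Lemma sigma_Iarr n : sigma Iarr n = Phi n.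
Proof. by apply: eq_bigr => b _; rewrite size_Iarr. Qed.

Lemma sigma_N0arr n : 0 < n -> sigma N0arr n = n.+1.
Proof.
elim: n => // -[|n] IH _; first by rewrite /sigma big_nat1.
by rewrite sigmaS IH // addn1.
Qed.

Lemma sigma_Qplus_arr n : sigma Qplus_arr n = (n + 1) * sigma Iarr n.
Proof.
case: n => [|n]; first by rewrite /sigma !big_geq.
by rewrite sigma_prod_arr sigma_N0arr // addn1.
Qed.

Lemma totient_leq_pred b : 1 < b -> totient b <= b.-1.
Proof.
move=> b_gt1; rewrite totient_sum_coprime big_nat_recr ?(ltnW b_gt1) //=.
rewrite /coprime gcdnn gtn_eqF // addn0 -[b.-1]subn1 -[_ - 1]muln1 -sum_nat_const_nat.
by apply: leq_sum => a _; apply: leq_b1.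
Qed.

Lemma Phi_upper n : 5 < n -> 2 * Phi n + 4 <= n * n.-1.
Proof.
elim: n => // n IH; rewrite ltnS leq_eqVlt => /predU1P[<- | n_gt5].
  by rewrite /Phi unlock.
rewrite /Phi big_nat_recr //= -/(Phi n).
have /totient_leq_pred : 1 < n.+1 by lia.
have := IH n_gt5; nia.
Qed.

Definition sieved_pair (S : seq nat) (a b : nat) : bool := all (fun p => ~~ (p %| gcdn a b)) S.

Definition sieve_count (S : seq nat) (n : nat) : nat :=
  \sum_(1 <= b < n.+1) \sum_(1 <= a < b.+1) sieved_pair S a b.

Lemma sieve_count_nil n : 2 * sieve_count [::] n = n * n.+1.
Proof.
elim: n => [|n IH]; first by rewrite /sieve_count big_geq.
rewrite /sieve_count big_nat_recr //= -/(sieve_count [::] n) mulnDr IH.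
rewrite sum_nat_const_nat; lia.
Qed.

Lemma sum_nat_multiples q n (F : nat -> nat) : 0 < q ->
  \sum_(1 <= b < n.+1) (if q %| b then F b else 0) = \sum_(1 <= b < (n %/ q).+1) F (q * b).
Proof.
move=> q_gt0; elim: n => [|n IH]; first by rewrite div0n !big_geq.
rewrite big_nat_recr //= IH divnS //; case: ifP => [q_dvd | _]; last by rewrite addn0.
rewrite add1n [RHS]big_nat_recr //=; congr (_ + F _).
by move: (divnS n q_gt0); rewrite q_dvd add1n => <-; rewrite mulnC divnK.
Qed.

Lemma sieved_pair_mull S q a b : {in S, forall p, coprime p q} ->
  sieved_pair S (q * a) (q * b) = sieved_pair S a b.
Proof. by move=> coS; apply: eq_in_all => p /coS coPq; rewrite -muln_gcdr Gauss_dvdr. Qed.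

Lemma sum_sieved_multiples S q n : 0 < q -> {in S, forall p, coprime p q} ->
  \sum_(1 <= b < n.+1) \sum_(1 <= a < b.+1) ((q %| gcdn a b) && sieved_pair S a b) =
  sieve_count S (n %/ q).
Proof.
move=> q_gt0 coS; rewrite /sieve_count.
pose G b := \sum_(1 <= a < b.+1) (if q %| a then sieved_pair S a b : nat else 0).
transitivity (\sum_(1 <= b < n.+1) (if q %| b then G b else 0)).
  apply: eq_bigr => b _; case: ifP => q_dvd_b.
    by apply: eq_bigr => a _; rewrite dvdn_gcd q_dvd_b andbT; case: ifP.
  by rewrite big1 // => a _; rewrite dvdn_gcd q_dvd_b andbF.
rewrite sum_nat_multiples //; apply: eq_bigr => b _.
rewrite /G sum_nat_multiples // mulKn //.
by apply: eq_bigr => a _; rewrite sieved_pair_mull.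
Qed.

Lemma sieve_count_cons S q n : 0 < q -> {in S, forall p, coprime p q} ->
  sieve_count S n = sieve_count (q :: S) n + sieve_count S (n %/ q).
Proof.
move=> q_gt0 coS; rewrite -sum_sieved_multiples // /sieve_count -big_split.
apply: eq_bigr => b _; rewrite -big_split; apply: eq_bigr => a _ /=.
by case: (q %| gcdn a b); case: sieved_pair.
Qed.

Definition primes_upto (P : nat) : seq nat := [seq p <- index_iota 2 P.+1 | prime p].

Lemma sieved_pair_primes_upto P n a b : 0 < a -> a <= b <= n ->
  sieved_pair (primes_upto P) a b <= coprime a b + \sum_(P.+1 <= q < n.+1) (q %| gcdn a b).
Proof.
move=> a_gt0 /andP[le_ab le_bn]; case: (boolP (coprime a b)) => [_ | not_co].
  by rewrite (leq_trans (leq_b1 _)) ?leq_addr.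
have gcd_gt1 : 1 < gcdn a b.
  by move: not_co (gcdn_gt0 a b); rewrite /coprime a_gt0; case: (gcdn a b) => [|[]].
set r := pdiv (gcdn a b); have r_prime : prime r := pdiv_prime gcd_gt1.
have r_dvd : r %| gcdn a b := pdiv_dvd _.
have [r_le_P | r_gt_P] := leqP r P.
  suff -> : sieved_pair (primes_upto P) a b = false by [].
  apply/negbTE/allPn; exists r; rewrite ?negbK //.
  by rewrite mem_filter r_prime mem_index_iota prime_gt1.
have r_le_n : r <= n.
  have r_le_a : r <= a := leq_trans (pdiv_leq (ltnW gcd_gt1)) (dvdn_leq a_gt0 (dvdn_gcdl a b)).
  exact: leq_trans r_le_a (leq_trans le_ab le_bn).
rewrite add0n (bigD1_seq r) ?iota_uniq ?mem_index_iota ?r_gt_P //= r_dvd.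
by rewrite (leq_trans (leq_b1 _)) ?leq_addr.
Qed.

Lemma sieve_count_primes_upto P n : sieve_count (primes_upto P) n <=
  Phi n + \sum_(P.+1 <= q < n.+1) sieve_count [::] (n %/ q).
Proof.
have -> : \sum_(P.+1 <= q < n.+1) sieve_count [::] (n %/ q) =
    \sum_(1 <= b < n.+1) \sum_(1 <= a < b.+1) \sum_(P.+1 <= q < n.+1) (q %| gcdn a b).
  under eq_big_nat => q /andP[q_gt_P _]
    do rewrite -sum_sieved_multiples ?(leq_ltn_trans _ q_gt_P) //.
  rewrite exchange_big_nat; apply: eq_bigr => b _.
  by rewrite exchange_big_nat; apply: eq_bigr => a _; apply: eq_bigr => q _; rewrite andbT.
rewrite /Phi /sieve_count -big_split !big_seq; apply: leq_sum => b.
rewrite mem_index_iota totient_sum_coprime -big_split !big_seq => b_range.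
apply: leq_sum => a; rewrite mem_index_iota => a_range.
by apply: sieved_pair_primes_upto; lia.
Qed.

Lemma sum_sqr_div_telescope P d n : 0 < P ->
  P * (P + d) * \sum_(P.+1 <= q < (P + d).+1) (n %/ q) ^ 2 <= n ^ 2 * d.
Proof.
move=> P_gt0; elim: d => [|d IH]; first by rewrite addn0 big_geq // muln0.
rewrite addnS big_nat_recr ?ltnS ?leq_addr //=.
move: IH; set N := P + d; set S := \sum_(_ <= _ < _) _ => IH.
have P_le_N : P <= N := leq_addr d P.
suff : N * (P * N.+1 * (S + (n %/ N.+1) ^ 2)) <= N * (n ^ 2 * d.+1).
  by rewrite leq_pmul2l //; apply: leq_trans P_le_N.
move: (n %/ N.+1) (leq_divM n N.+1) => m mN_le_n.
have mN_sqr : (m * N.+1) ^ 2 <= n ^ 2 by rewrite leq_sqr.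
have : N * N.+1 * m ^ 2 <= n ^ 2 by apply: leq_trans mN_sqr; nia.
nia.
Qed.

Lemma sum_sqr_div_tail P n : 0 < P -> P * \sum_(P.+1 <= q < n.+1) (n %/ q) ^ 2 <= n ^ 2.
Proof.
move=> P_gt0; have [n_le_P | P_lt_n] := leqP n P; first by rewrite big_geq ?muln0.
have := @sum_sqr_div_telescope P (n - P) n P_gt0; rewrite subnKC ?(ltnW P_lt_n) // => tele.
by rewrite -(@leq_pmul2l n) ?(leq_ltn_trans _ P_lt_n) //; nia.
Qed.

Lemma sum_sieve_count_nil_tail P K n : 0 < P ->
  K * P * (2 * \sum_(P.+1 <= q < n.+1) sieve_count [::] (n %/ q)) <=
  (K + 1) * n ^ 2 + K ^ 2 * P * n.
Proof.
move=> P_gt0; have sqr_tail := @sum_sqr_div_tail P n P_gt0.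
have lin_tail : K * \sum_(P.+1 <= q < n.+1) (n %/ q) <=
                \sum_(P.+1 <= q < n.+1) (n %/ q) ^ 2 + K ^ 2 * n.
  rewrite big_distrr /=; apply: (@leq_trans (\sum_(P.+1 <= q < n.+1) ((n %/ q) ^ 2 + K ^ 2))).
    by apply: leq_sum => q _; nia.
  by rewrite big_split /= leq_add2l sum_nat_const_nat; nia.
rewrite big_distrr /=.
under eq_bigr => q _ do rewrite sieve_count_nil mulnSr mulnn.
rewrite big_split /=; nia.
Qed.

Local Open Scope Z_scope.

(* Integer constants, so that those for the primes up to 160 can be computed exactly:
   [C / D] is the leading coefficient of [2 f] and [E / D] bounds its linear error. *)
Definition enveloped (k : Z * Z * Z) (f : nat -> nat) : Prop :=
  let: (D, C, E) := k in
  forall n : nat, Z.abs (2 * D * Z.of_nat (f n) - C * Z.of_nat n ^ 2) <= E * Z.of_nat n.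

Definition sieve_step (z : Z) (k : Z * Z * Z) : Z * Z * Z :=
  let: (D, C, E) := k in (z ^ 2 * D, (z ^ 2 - 1) * C, E * (z ^ 2 + z) + 2 * Z.abs C * z).

Fixpoint sieve_envelope (S : seq nat) : Z * Z * Z :=
  if S is q :: S' then sieve_step (Z.of_nat q) (sieve_envelope S') else (1, 1, 1).

Lemma enveloped_sieve_step k (q : nat) (f g : nat -> nat) : (0 < q)%N ->
  enveloped k f -> (forall n, f n = g n + f (n %/ q))%N -> enveloped (sieve_step (Z.of_nat q) k) g.
Proof.
case: k => [[D C] E] q_gt0 env_f split_f; set z := Z.of_nat q => n.
have E_ge0 : 0 <= E by rewrite -(Z.mul_1_r E); exact: Z.le_trans (Z.abs_nonneg _) (env_f 1%N).
have z_ge0 : 0 <= z := Nat2Z.is_nonneg q.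
have z2_ge0 : 0 <= z ^ 2 := Z.pow_nonneg z 2 z_ge0.
have /andP[qk_le_n n_lt_qk] : (q * (n %/ q) <= n < q * (n %/ q) + q)%N.
  by rewrite {2 3}(divn_eq n q) mulnC leq_addr ltn_add2l ltn_pmod.
move: (n %/ q)%N (split_f n) (env_f (n %/ q)%N) (env_f n) qk_le_n n_lt_qk.
move=> k split_n + + qk_le_n n_lt_qk; set x := Z.of_nat n; set m := Z.of_nat k.
have [r_ge0 r_lt_z] : 0 <= x - z * m < z by rewrite /z /m /x; lia.
have zm_le_x : z * m <= x by lia.
have W_ge0 : 0 <= (x - z * m) * (x + z * m) by apply: Z.mul_nonneg_nonneg; lia.
have W_le : (x - z * m) * (x + z * m) <= z * (2 * x) by apply: Z.mul_le_mono_nonneg; lia.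
set X := 2 * D * _ - C * x ^ 2; set Y := 2 * D * _ - C * m ^ 2 => env_k env_n.
have -> : 2 * (z ^ 2 * D) * Z.of_nat (g n) - (z ^ 2 - 1) * C * x ^ 2 =
          z ^ 2 * X - z ^ 2 * Y + C * ((x - z * m) * (x + z * m)).
  by rewrite /X /Y split_n Nat2Z.inj_add; ring.
have bX : Z.abs (z ^ 2 * X) <= z ^ 2 * (E * x).
  by rewrite Z.abs_mul (Z.abs_eq _ z2_ge0); apply: Z.mul_le_mono_nonneg_l.
have bY : Z.abs (z ^ 2 * Y) <= z * (E * x).
  rewrite Z.abs_mul (Z.abs_eq _ z2_ge0).
  apply: Z.le_trans (Z.mul_le_mono_nonneg_l _ _ _ z2_ge0 env_k) _.
  rewrite (_ : z ^ 2 * (E * m) = z * (E * (z * m))); last by ring.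
  by apply/(Z.mul_le_mono_nonneg_l _ _ _ z_ge0)/Z.mul_le_mono_nonneg_l.
have bW : Z.abs (C * ((x - z * m) * (x + z * m))) <= Z.abs C * (z * (2 * x)).
  by rewrite Z.abs_mul (Z.abs_eq _ W_ge0); apply/Z.mul_le_mono_nonneg_l/W_le/Z.abs_nonneg.
rewrite (_ : _ * x = z ^ 2 * (E * x) + z * (E * x) + Z.abs C * (z * (2 * x))); last by ring.
apply: Z.le_trans (Z.abs_triangle _ _) _; apply: Z.add_le_mono => //.
rewrite -Z.add_opp_r; apply: Z.le_trans (Z.abs_triangle _ _) _.
by rewrite Z.abs_opp; apply: Z.add_le_mono.
Qed.

Lemma enveloped_sieve_count S : all prime S -> uniq S ->
  enveloped (sieve_envelope S) (sieve_count S).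
Proof.
elim: S => [_ _ n | q S IH /andP[q_prime S_prime] /andP[qNS S_uniq]].
  rewrite Z.pow_2_r Z.abs_le; have := sieve_count_nil n; lia.
have coS : {in S, forall p, coprime p q}.
  move=> p pS; have p_prime : prime p by move/allP: S_prime => /(_ p pS).
  rewrite prime_coprime // dvdn_prime2 //; apply: contraNneq qNS => <-.
  exact: pS.
apply: enveloped_sieve_step (IH S_prime S_uniq) _ => [|n]; first exact: prime_gt0.
exact: sieve_count_cons (prime_gt0 q_prime) coS.
Qed.

Lemma Phi_lower_envelope P K D C E n : (0 < P)%N -> 0 <= D ->
  enveloped (D, C, E) (sieve_count (primes_upto P)) ->
  let p := Z.of_nat (K * P) in let x := Z.of_nat n in
  (p * C - Z.of_nat K.+1 * D) * x ^ 2 - (p * E + Z.of_nat K * p * D) * x <=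
  2 * p * D * Z.of_nat (Phi n).
Proof.
move=> P_gt0 D_ge0 /(_ n) env_n p x.
have := sieve_count_primes_upto P n; have := @sum_sieve_count_nil_tail P K n P_gt0.
move: (sieve_count _ n) (\sum_(_ <= _ < _) _) (Phi n) env_n => s T phi env_n tail s_le.
have p_ge0 : 0 <= p := Nat2Z.is_nonneg _.
have sD : p * (D * Z.of_nat s) <= p * (D * (Z.of_nat phi + Z.of_nat T)).
  by apply/Z.mul_le_mono_nonneg_l/Z.mul_le_mono_nonneg_l => //; lia.
have tD : D * (p * (2 * Z.of_nat T)) <= D * (Z.of_nat K.+1 * x ^ 2 + Z.of_nat K * p * x).
  by apply: Z.mul_le_mono_nonneg_l => //; rewrite /p /x Z.pow_2_r; lia.
have eD : p * (C * x ^ 2 - E * x) <= p * (2 * D * Z.of_nat s).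
  by apply: Z.mul_le_mono_nonneg_l => //; move/Z.abs_le: env_n; lia.
lia.
Qed.

Lemma Phi_lower_eventually : exists N, forall n, (N <= n)%N -> (3 * n ^ 2 < 10 * Phi n)%N.
Proof.
(* [C / D] is [prod_(p <= 160) (1 - p^-2) = 0.6087...], just above [971 / 1600]. *)
have margin : let: (D, C, _) := sieve_envelope (primes_upto 160) in
  0 < D /\ 971 * D < 1600 * C by vm_compute.
have := @enveloped_sieve_count (primes_upto 160) (filter_all _ _) (filter_uniq _ (iota_uniq _ _)).
move: margin; case: (sieve_envelope _) => [[D C] E] [D_gt0 C_large] env.
exists (Z.to_nat (1600 * E + 16000 * D)).+1 => n n_large.
have lower := @Phi_lower_envelope 160 10 D C E n isT (Z.lt_le_incl _ _ D_gt0) env.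
cbv zeta in lower; rewrite Z.pow_2_r in lower; set x := Z.of_nat n in lower.
have x_large : 1600 * E + 16000 * D < x by rewrite /x; lia.
have gap : (1600 * E + 16000 * D) * x < (1600 * C - 971 * D) * (x * x).
  apply: (Z.lt_le_trans _ (x * x)); first by apply Z.mul_lt_mono_pos_r; lia.
  by rewrite -[X in X <= _]Z.mul_1_l; apply: Z.mul_le_mono_nonneg_r; lia.
suff /(proj2 (Z.mul_lt_mono_pos_l D _ _ D_gt0)) :
  D * (960 * (x * x)) < D * (3200 * Z.of_nat (Phi n)).
  by rewrite /x; lia.
lia.
Qed.

Local Close Scope Z_scope.
Local Open Scope ring_scope.

Theorem theorem11 :
  (forall n : nat, sigma Qplus_arr n = ((n + 1) * sigma Iarr n)%N) /\
  (forall n : nat, sigma Qplus_arr n = ((n + 1) * Phi n)%N) /\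
  approxF (fun n => (sigma Qplus_arr n)%:R) (fun n => (n ^ 3)%:R) /\
  ltF (fun n => (3%:R / 10%:R) * ((n ^ 3)%:R + (n ^ 2)%:R))
      (fun n => (sigma Qplus_arr n)%:R) /\
  ltF (fun n => (sigma Qplus_arr n)%:R)
      (fun n => ((n ^ 3)%:R - n%:R) / 2%:R).
Proof.
have sigma_Phi n : sigma Qplus_arr n = ((n + 1) * Phi n)%N.
  by rewrite sigma_Qplus_arr sigma_Iarr.
have [N Phi_large] := Phi_lower_eventually.
split; first exact: sigma_Qplus_arr.
split; first exact: sigma_Phi.
split; [split | split].
- exists 4%N; split => //; exists N => n /Phi_large.
  by rewrite -natrM ler_nat sigma_Phi; nia.
- exists 2%N; split => //; exists 6%N => n /Phi_upper.
  by rewrite -natrM ler_nat sigma_Phi; nia.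
- exists N => n /Phi_large.
  by rewrite -natrD mulrC mulrA -natrM ltr_pdivrMr ?ltr0n // -natrM ltr_nat sigma_Phi; nia.
- exists 6%N => n /Phi_upper Phi_n.
  rewrite -natrB; last by nia.
  by rewrite ltr_pdivlMr ?ltr0n // -natrM ltr_nat sigma_Phi; nia.
Qed.
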